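(* Let $f:(N,F,\{F_\sigma\})\to(N',F',\{F'_\tau\})$ be a morphism of KM fans, $\sigma\in F$, $\tau\in F'$ a cone containing $f_{\mathbb R}(\sigma)$, and $L'\subseteq N'$ a lifting of $F'_\tau$. (1) There exists a lifting $L\subseteq N$ of $F_\sigma$ with $f(L)\subseteq L'$. (2) If $f$ is injective on torsion subgroups $N_{\rm tor}\to N'_{\rm tor}$ (equivalently $\operatorname{Ker}f$ is torsion-free) and $f|_{F_\sigma}:F_\sigma\to F'_\tau$ is bijective, then the map $(N/F_\sigma)_{\rm tor}\to(N'/F'_\tau)_{\rm tor}$ induced by $f$ is injective. (3) If $(N/F_\sigma)_{\rm tor}\to(N'/F'_\tau)_{\rm tor}$ is injective, then $L:=f^{-1}(L')$ is a lifting of $F_\sigma$, and for this $L$ the induced map of finite groups $N/L\to N'/L'$ is injective. (4) If there is a lifting $L$ of $F_\sigma$ with $f(L)\subseteq L'$ and $N/L\to N'/L'$ injective, then $(N/F_\sigma)_{\rm tor}\to(N'/F'_\tau)_{\rm tor}$ is injective.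
   Context: For a finitely generated abelian group $N$, $N_{\mathbb R}=N\otimes\mathbb R$ and $N_{\rm tor}$ is its torsion subgroup; for a subgroup $A\subseteq N$ and $\sigma\subseteq N_{\mathbb R}$, $A\cap\sigma$ means elements of $A$ whose image lies in $\sigma$. A KM fan $(N,F,\{F_\sigma\})$: a finitely generated abelian group $N$, a fan $F$ in $N_{\mathbb R}$ (finite nonempty set of sharp cones generated by images of elements of $N$, closed under faces, pairwise meeting in common faces), and for each $\sigma\in F$ a torsion-free subgroup $F_\sigma$ of finite index in $N\cap\operatorname{Span}\sigma$, with $F_\tau=F_\sigma\cap\operatorname{Span}\tau$ for faces $\tau\le\sigma$. A morphism is a homomorphism $f:N\to N'$ such that for every $\sigma\in F$ some $\tau\in F'$ has $f_{\mathbb R}(\sigma)\subseteq\tau$ and $f(F_\sigma)\subseteq F'_\tau$. A lifting of the lattice datum $F_\sigma$ is a torsion-free subgroup $L\subseteq N$ with $N/L$ finite and $F_\sigma=L\cap\operatorname{Span}\sigma$. *)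

From HB Require Import structures.
From mathcomp Require Import all_boot all_order all_algebra.
From mathcomp Require Import reals.

Set Implicit Arguments.
Unset Strict Implicit.
Unset Printing Implicit Defensive.

Import Order.TTheory GRing.Theory Num.Theory.
Local Open Scope ring_scope.

Definition additive_fun (N N' : zmodType) (f : N -> N') : Prop :=
  forall x y, f (x - y) = f x - f y.

Definition torsion (N : zmodType) (x : N) : Prop :=
  exists k : nat, (0 < k)%N /\ x *+ k = 0.

Definition finitely_generated (N : zmodType) : Prop :=
  exists (k : nat) (g : 'I_k -> N),
    forall x, exists c : 'I_k -> int, x = \sum_(i < k) g i *~ c i.

Definition subgroup (N : zmodType) (A : N -> Prop) : Prop :=
  A 0 /\ forall x y, A x -> A y -> A (x - y).

Definition torsion_free (N : zmodType) (A : N -> Prop) : Prop :=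
  forall x, A x -> torsion x -> x = 0.

Definition finite_index_in (N : zmodType) (B A : N -> Prop) : Prop :=
  exists (k : nat) (r : 'I_k -> N),
    (forall m, A (r m)) /\ forall x, A x -> exists m, B (x - r m).

(* iota : N -> 'rV[R]_n is a model of N -> N (x)_Z R: it is additive, its
   kernel is N_tor, and there are e_1..e_n in N which generate N modulo
   torsion and whose images form an R-basis of 'rV_n. *)
Definition realification (R : realType) (N : zmodType) (n : nat)
  (iota : N -> 'rV[R]_n) : Prop :=
  [/\ additive_fun iota,
      (forall x, iota x = 0 <-> torsion x) &
      exists e : 'I_n -> N,
        (forall x, exists c : 'I_n -> int, torsion (x - \sum_(i < n) e i *~ c i))
        /\ row_free (\matrix_(i < n) iota (e i))].

Definition set_eq (T : Type) (A B : T -> Prop) : Prop := forall v, A v <-> B v.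

Definition rational_cone (R : realType) (N : zmodType) (n : nat)
  (iota : N -> 'rV[R]_n) (C : 'rV[R]_n -> Prop) : Prop :=
  exists (k : nat) (g : 'I_k -> N),
    forall v, C v <-> exists c : 'I_k -> R,
      (forall m, 0 <= c m) /\ v = \sum_(m < k) c m *: iota (g m).

Definition sharp (R : realType) (n : nat) (C : 'rV[R]_n -> Prop) : Prop :=
  forall v, C v -> C (- v) -> v = 0.

Definition face (R : realType) (n : nat) (tau sigma : 'rV[R]_n -> Prop) : Prop :=
  exists u : 'cV[R]_n,
    (forall v, sigma v -> 0 <= (v *m u) 0 0) /\
    (forall v, tau v <-> sigma v /\ (v *m u) 0 0 = 0).

Definition span (R : realType) (n : nat) (C : 'rV[R]_n -> Prop) (v : 'rV[R]_n)
  : Prop :=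
  exists (k : nat) (w : 'I_k -> 'rV[R]_n) (c : 'I_k -> R),
    (forall m, C (w m)) /\ v = \sum_(m < k) c m *: w m.

(* A KM fan (N, F, {F_sigma}) : the cones of F are indexed (without
   repetition) by a finite type I, sigma i is the i-th cone and Lat i is the
   lattice datum F_(sigma i). *)
Definition lattice_datum (R : realType) (N : zmodType) (n : nat)
  (iota : N -> 'rV[R]_n) (sigma : 'rV[R]_n -> Prop) (A : N -> Prop) : Prop :=
  [/\ subgroup A, torsion_free A,
      (forall x, A x -> span sigma (iota x)) &
      finite_index_in A (fun x => span sigma (iota x))].

Definition KMfan (R : realType) (N : zmodType) (n : nat) (iota : N -> 'rV[R]_n)
  (I : finType) (sigma : I -> 'rV[R]_n -> Prop) (Lat : I -> N -> Prop) : Prop :=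
  finitely_generated N /\ realification iota /\ (0 < #|I|)%N /\
  (forall i, rational_cone iota (sigma i) /\ sharp (sigma i)) /\
  (forall i j, set_eq (sigma i) (sigma j) -> i = j) /\
  (forall i (tau : 'rV[R]_n -> Prop), face tau (sigma i) ->
      exists j, set_eq tau (sigma j)) /\
  (forall i j, exists k,
      [/\ set_eq (sigma k) (fun v => sigma i v /\ sigma j v),
          face (sigma k) (sigma i) & face (sigma k) (sigma j)]) /\
  (forall i, lattice_datum iota (sigma i) (Lat i)) /\
  (forall i j, face (sigma j) (sigma i) ->
      forall x, Lat j x <-> Lat i x /\ span (sigma j) (iota x)).

(* fR is the realification f_R of f : it is R-linear and fR o iota = iota' o f
   (this determines fR uniquely since iota(N) spans). *)
Definition realified_map (R : realType) (N N' : zmodType) (n n' : nat)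
  (iota : N -> 'rV[R]_n) (iota' : N' -> 'rV[R]_n') (f : N -> N')
  (fR : 'rV[R]_n -> 'rV[R]_n') : Prop :=
  (forall (a : R) u v, fR (a *: u + v) = a *: fR u + fR v) /\
  (forall x, fR (iota x) = iota' (f x)).

Definition KMmorphism (R : realType) (N N' : zmodType) (n n' : nat)
  (I I' : finType) (sigma : I -> 'rV[R]_n -> Prop) (Lat : I -> N -> Prop)
  (sigma' : I' -> 'rV[R]_n' -> Prop) (Lat' : I' -> N' -> Prop)
  (f : N -> N') (fR : 'rV[R]_n -> 'rV[R]_n') : Prop :=
  additive_fun f /\
  forall i, exists j, (forall v, sigma i v -> sigma' j (fR v)) /\
                      (forall x, Lat i x -> Lat' j (f x)).

Definition lifting (R : realType) (N : zmodType) (n : nat)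
  (iota : N -> 'rV[R]_n) (sigma : 'rV[R]_n -> Prop) (A L : N -> Prop) : Prop :=
  [/\ subgroup L, torsion_free L, finite_index_in L (fun _ => True) &
      forall x, A x <-> L x /\ span sigma (iota x)].

Definition torsion_mod (N : zmodType) (A : N -> Prop) (x : N) : Prop :=
  exists k : nat, (0 < k)%N /\ A (x *+ k).

(* The map (N/A)_tor -> (N'/A')_tor induced by f is injective *)
Definition induced_tor_injective (N N' : zmodType) (f : N -> N')
  (A : N -> Prop) (A' : N' -> Prop) : Prop :=
  forall x y, torsion_mod A x -> torsion_mod A y -> A' (f x - f y) -> A (x - y).

Definition induced_injective (N N' : zmodType) (f : N -> N')
  (L : N -> Prop) (L' : N' -> Prop) : Prop :=
  forall x y, L' (f x - f y) -> L (x - y).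

(** An element x is torsion modulo F_σ exactly when iota(x) lies in Span σ.
    As F_σ and any lifting L' have finite index in the relevant groups, some
    K > 0 satisfies K·x ∈ F_σ for every x over Span σ and K·N' ⊆ L'; hence
    F_σ + K·N is a lifting of F_σ mapped into L'.  If (N/F_σ)_tor injects,
    an element over Span σ with image in L' maps into F'_τ and is torsion
    modulo F_σ, hence lies in F_σ, so f⁻¹(L') is a lifting.  Parts (2) and
    (4) are diagram chases. *)
From Pilot Require Import Defs.
From HB Require Import structures.
From mathcomp Require Import all_boot all_order all_algebra.
From mathcomp Require Import reals.
From Stdlib Require Import ClassicalEpsilon.

Set Implicit Arguments.
Unset Strict Implicit.
Unset Printing Implicit Defensive.
Import Order.TTheory GRing.Theory Num.Theory.
Local Open Scope ring_scope.

Section AdditiveFun.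
Variables (N N' : zmodType) (f : N -> N').
Hypothesis fA : additive_fun f.

Lemma additive_fun0 : f 0 = 0.
Proof. by have := fA 0 0; rewrite !subrr. Qed.

Lemma additive_funN x : f (- x) = - f x.
Proof. by have := fA 0 x; rewrite sub0r additive_fun0 sub0r. Qed.

Lemma additive_funD x y : f (x + y) = f x + f y.
Proof. by have := fA x (- y); rewrite additive_funN !opprK. Qed.

Lemma additive_funMn x k : f (x *+ k) = f x *+ k.
Proof.
elim: k => [|k IHk]; first by rewrite !mulr0n additive_fun0.
by rewrite !mulrS additive_funD IHk.
Qed.

End AdditiveFun.

Section Subgroup.
Variables (N : zmodType) (A : N -> Prop).
Hypothesis hA : subgroup A.

Lemma subgroup0 : A 0.
Proof. by case: hA. Qed.

Lemma subgroupB x y : A x -> A y -> A (x - y).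
Proof. exact: hA.2. Qed.

Lemma subgroupN x : A x -> A (- x).
Proof. by rewrite -sub0r; apply: subgroupB; apply: subgroup0. Qed.

Lemma subgroupD x y : A x -> A y -> A (x + y).
Proof.
by move=> Ax Ay; rewrite -[y]opprK; apply: subgroupB => //; apply: subgroupN.
Qed.

Lemma subgroupMn x k : A x -> A (x *+ k).
Proof.
move=> Ax; elim: k => [|k IHk]; first by rewrite mulr0n; apply: subgroup0.
by rewrite mulrS; apply: subgroupD.
Qed.

Lemma torsion_modB x y :
  torsion_mod A x -> torsion_mod A y -> torsion_mod A (x - y).
Proof.
move=> [a [a_gt0 Axa]] [b [b_gt0 Ayb]]; exists (a * b)%N.
rewrite muln_gt0 a_gt0 mulrnBl {2}mulnC !mulrnA; split=> //.
by apply: subgroupB; apply: subgroupMn.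
Qed.

Lemma preimage_subgroup (M : zmodType) (g : M -> N) :
  additive_fun g -> subgroup (fun x => A (g x)).
Proof.
move=> gA; split=> [|x y Agx Agy]; last by rewrite gA; apply: subgroupB.
by rewrite additive_fun0 //; apply: subgroup0.
Qed.

End Subgroup.

(* Pigeonhole: two of the k+1 multiples x*0, ..., x*k lie in the same coset. *)
Lemma multiple_in_subgroup (N : zmodType) (B : N -> Prop) (k : nat)
    (r : 'I_k -> N) x :
  subgroup B -> (forall t : nat, exists m, B (x *+ t - r m)) ->
  exists2 d, (0 < d <= k)%N & B (x *+ d).
Proof.
move=> hB hr.
have [g hg] := choice (fun (t : 'I_k.+1) m => B (x *+ t - r m)) (fun t => hr t).
have /injectivePn[a [b neq_ab eq_g]] : ~~ injectiveb g.
  by apply/injectiveP => /leq_card; rewrite !card_ord ltnn.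
wlog lt_ab : a b neq_ab eq_g / (a < b)%N.
  move=> IH; case: (ltngtP a b) => [|lt_ba|/val_inj eq_ab]; first exact: IH.
    by apply: (IH b a) => //; rewrite eq_sym.
  by rewrite eq_ab eqxx in neq_ab.
exists (b - a)%N.
  by rewrite subn_gt0 lt_ab -ltnS (leq_ltn_trans (leq_subr a b)).
have := subgroupB hB (hg b) (hg a).
by rewrite eq_g opprB addrA subrK mulrnBr // ltnW.
Qed.

Lemma finite_index_exponent (N : zmodType) (B A : N -> Prop) :
  subgroup B -> (forall x k, A x -> A (x *+ k)) -> finite_index_in B A ->
  exists2 K, (0 < K)%N & forall x, A x -> B (x *+ K).
Proof.
move=> hB hA [k [r [_ hr]]]; exists k`!; first exact: fact_gt0.
move=> x Ax; have [d /dvdn_fact/divnK <- Bxd] :=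
  multiple_in_subgroup hB (fun t => hr _ (hA x t Ax)).
by rewrite mulnC mulrnA; apply: subgroupMn.
Qed.

Lemma lifting_exponent (R : realType) (N : zmodType) (n : nat)
    (iota : N -> 'rV[R]_n) (sigma : 'rV[R]_n -> Prop) (A L : N -> Prop) :
  lifting iota sigma A L -> exists2 K, (0 < K)%N & forall x, L (x *+ K).
Proof.
case=> hL _ finL _.
have [K K_gt0 hK] := finite_index_exponent hL (fun _ _ _ => I) finL.
by exists K => // x; apply: hK.
Qed.

(* Coset representatives: the sums of generators with coefficients in [0, k). *)
Lemma finite_index_of_multiples (N : zmodType) (B : N -> Prop) (k : nat) :
  finitely_generated N -> subgroup B -> (0 < k)%N ->
  (forall y, B (y *+ k)) -> finite_index_in B (fun _ => True).
Proof.
move=> [m [g hg]] hB k_gt0 hk.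
exists #|{ffun 'I_m -> 'I_k}|.
exists (fun t : 'I_#|{ffun 'I_m -> 'I_k}| => \sum_(i < m) g i *+ enum_val t i).
split=> // x _.
have [c ->] := hg x.
have k_neq0 : k%:Z != 0 by rewrite eqz_nat -lt0n.
have ltk i : (`|(c i %% k%:Z)%Z|%N < k)%N.
  by rewrite -ltz_nat gez0_abs ?modz_ge0 ?ltz_pmod ?ltz_nat.
exists (enum_rank [ffun i => Ordinal (ltk i)]); rewrite enum_rankK -sumrB.
have quot i : g i *~ c i - g i *+ [ffun i => Ordinal (ltk i)] i
              = (g i *~ (c i %/ k%:Z)%Z) *+ k.
  have mod_ge0 : 0 <= (c i %% k%:Z)%Z by rewrite modz_ge0.
  rewrite ffunE /= pmulrn (gez0_abs mod_ge0) {1}(divz_eq (c i) k).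
  by rewrite mulrzDr addrK mulrzA.
by rewrite (eq_bigr _ (fun i _ => quot i)) sumrMnl.
Qed.

Section Span.
Variables (R : realType) (n : nat) (C : 'rV[R]_n -> Prop).

Lemma span0 : Defs.span C 0.
Proof.
by exists 0%N, (fun=> 0), (fun=> 0); split; [case | rewrite big_ord0].
Qed.

Lemma spanZ a v : Defs.span C v -> Defs.span C (a *: v).
Proof.
move=> [k [w [c [hw ->]]]]; exists k, w, (fun m => a * c m); split=> //.
by rewrite scaler_sumr; apply: eq_bigr => m _; rewrite scalerA.
Qed.

Lemma spanD u v : Defs.span C u -> Defs.span C v -> Defs.span C (u + v).
Proof.
move=> [k1 [w1 [c1 [hw1 ->]]]] [k2 [w2 [c2 [hw2 ->]]]].
exists (k1 + k2)%N,
  (fun m => match split m with inl a => w1 a | inr b => w2 b end),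
  (fun m => match split m with inl a => c1 a | inr b => c2 b end).
split=> [m|]; first by case: (split m).
by rewrite big_split_ord; congr (_ + _); apply: eq_bigr => m _;
  [rewrite (unsplitK (inl m)) | rewrite (unsplitK (inr m))].
Qed.

Lemma spanB u v : Defs.span C u -> Defs.span C v -> Defs.span C (u - v).
Proof. by move=> Cu Cv; rewrite -scaleN1r; apply/spanD/spanZ. Qed.

Lemma span_of_mulrn v k : (0 < k)%N -> Defs.span C (v *+ k) -> Defs.span C v.
Proof.
move=> k_gt0 /(spanZ k%:R^-1).
by rewrite -scaler_nat scalerA mulVf ?scale1r // pnatr_eq0 -lt0n.
Qed.

Lemma span_image (n' : nat) (C' : 'rV[R]_n' -> Prop)
    (g : 'rV[R]_n -> 'rV[R]_n') v :
  (forall (a : R) u w, g (a *: u + w) = a *: g u + g w) ->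
  (forall u, C u -> C' (g u)) -> Defs.span C v -> Defs.span C' (g v).
Proof.
move=> g_lin gC [k [w [c [hw ->]]]].
have g0 : g 0 = 0.
  have := g_lin 1 0 0; rewrite !scale1r addr0 => g00.
  by apply: (addrI (g 0)); rewrite addr0 -g00.
have gD u u' : g (u + u') = g u + g u'.
  by have := g_lin 1 u u'; rewrite !scale1r.
have gZ a u : g (a *: u) = a *: g u.
  by have := g_lin a u 0; rewrite !addr0 g0 addr0.
exists k, (g \o w), c; split=> [m|]; first exact: gC.
by rewrite (big_morph g gD g0); apply: eq_bigr => m _; rewrite gZ.
Qed.

End Span.

Lemma induced_tor_injective_mem (N N' : zmodType) (f : N -> N') (A : N -> Prop)
    (A' : N' -> Prop) x :
  additive_fun f -> subgroup A -> induced_tor_injective f A A' ->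
  torsion_mod A x -> A' (f x) -> A x.
Proof.
move=> fA hA hti tx A'fx; rewrite -[x]subr0; apply: hti => //.
  by exists 1%N; rewrite mul0rn; split=> //; apply: subgroup0.
by rewrite additive_fun0 // subr0.
Qed.

(* If f(w) = f(x - y) with w ∈ A, then x - y - w is a torsion element of
   Ker f. *)
Lemma induced_tor_injective_of_bij (N N' : zmodType) (f : N -> N')
    (A : N -> Prop) (A' : N' -> Prop) :
  additive_fun f -> subgroup A ->
  (forall x y, torsion x -> torsion y -> f x = f y -> x = y) ->
  (forall x y, A x -> A y -> f x = f y -> x = y) ->
  (forall y', A' y' -> exists x, A x /\ f x = y') ->
  induced_tor_injective f A A'.
Proof.
move=> fA hA tor_inj lat_inj lat_surj x y tx ty.
rewrite -fA => /lat_surj[w [Aw fw]].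
have [k [k_gt0 Ak]] := torsion_modB hA tx ty.
have fz0 : f (x - y - w) = 0 by rewrite fA fw subrr.
have tz : torsion (x - y - w).
  exists k; split=> //; apply: lat_inj.
  - by rewrite mulrnBl; apply: subgroupB => //; apply: subgroupMn.
  - exact: subgroup0.
  - by rewrite additive_funMn // fz0 mul0rn additive_fun0.
have : x - y - w = 0.
  apply: tor_inj => //; last by rewrite fz0 additive_fun0.
  by exists 1%N; rewrite mul0rn.
by move/subr0_eq ->.
Qed.

(* f(F_σ) lies in F'_τ0 for the τ0 given by the morphism; τ0 ∩ τ is a common
   face of τ0 and τ and f(F_σ) lies over its span, hence in
   F'_(τ0 ∩ τ) ⊆ F'_τ. *)
Lemma KMmorphism_lattice_into (R : realType) (N N' : zmodType) (n n' : nat)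
    (iota : N -> 'rV[R]_n) (iota' : N' -> 'rV[R]_n') (I I' : finType)
    (sigma : I -> 'rV[R]_n -> Prop) (Lat : I -> N -> Prop)
    (sigma' : I' -> 'rV[R]_n' -> Prop) (Lat' : I' -> N' -> Prop)
    (f : N -> N') (fR : 'rV[R]_n -> 'rV[R]_n') (i : I) (j : I') :
  KMfan iota' sigma' Lat' -> lattice_datum iota (sigma i) (Lat i) ->
  realified_map iota iota' f fR -> KMmorphism sigma Lat sigma' Lat' f fR ->
  (forall v, sigma i v -> sigma' j (fR v)) ->
  forall x, Lat i x -> Lat' j (f x).
Proof.
move=> [_ [_ [_ [_ [_ [_ [meet' [_ face']]]]]]]] [_ _ Lspan _].
move=> [fRlin fRi] [_ fmor] hij x Lx; have [j0 [hs0 hl0]] := fmor i.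
have [k [meet_k face_kj face_kj0]] := meet' j j0.
apply: ((face' j k face_kj (f x)).1 _).1.
apply: (face' j0 k face_kj0 (f x)).2; split; first exact: hl0.
rewrite -fRi; apply: (span_image fRlin _ (Lspan x Lx)) => v sv.
by apply: (meet_k (fR v)).2; split; [apply: hij | apply: hs0].
Qed.

Definition add_multiples (N : zmodType) (A : N -> Prop) (k : nat) (x : N) :=
  exists a y, A a /\ x = a + y *+ k.

Lemma subgroup_add_multiples (N : zmodType) (A : N -> Prop) k :
  subgroup A -> subgroup (add_multiples A k).
Proof.
move=> hA; split.
  by exists 0, 0; rewrite mul0rn addr0; split=> //; apply: subgroup0.
move=> _ _ [a [y [Aa ->]]] [a' [y' [Aa' ->]]]; exists (a - a'), (y - y').
by rewrite mulrnBl opprD addrACA; split=> //; apply: subgroupB.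
Qed.

Lemma add_multiples_preimage (N N' : zmodType) (f : N -> N') (A : N -> Prop)
    (L' : N' -> Prop) k :
  additive_fun f -> subgroup L' -> (forall x, A x -> L' (f x)) ->
  (forall y, L' (y *+ k)) -> forall x, add_multiples A k x -> L' (f x).
Proof.
move=> fA hL' AL' hk _ [a [y [Aa ->]]].
by rewrite additive_funD // additive_funMn //; apply: subgroupD => //; apply: AL'.
Qed.

Section Lifting.
Variables (R : realType) (N N' : zmodType) (n n' : nat).
Variables (iota : N -> 'rV[R]_n) (iota' : N' -> 'rV[R]_n').
Variables (f : N -> N') (fR : 'rV[R]_n -> 'rV[R]_n').
Variables (sigma : 'rV[R]_n -> Prop) (sigma' : 'rV[R]_n' -> Prop).
Variables (A : N -> Prop) (A' L' : N' -> Prop).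
Hypotheses (fgN : finitely_generated N) (iotaA : additive_fun iota).
Hypothesis iota_torsion : forall x, torsion x -> iota x = 0.
Hypotheses (fA : additive_fun f) (hfR : realified_map iota iota' f fR).
Hypothesis fR_cone : forall v, sigma v -> sigma' (fR v).
Hypotheses (hA : lattice_datum iota sigma A) (hL' : lifting iota' sigma' A' L').
Hypothesis f_lat : forall x, A x -> A' (f x).

Lemma lattice_datum_exponent :
  exists2 K, (0 < K)%N & forall x, Defs.span sigma (iota x) -> A (x *+ K).
Proof.
case: hA => hAsg _ _ Afin; apply: finite_index_exponent => // x k sx.
by rewrite additive_funMn // -scaler_nat; apply: spanZ.
Qed.

Lemma span_of_torsion_mod x : torsion_mod A x -> Defs.span sigma (iota x).
Proof.
case: hA => _ _ Aspan _ [k [k_gt0 Axk]].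
by apply: (span_of_mulrn k_gt0); rewrite -additive_funMn //; apply: Aspan.
Qed.

Lemma lifting_add_multiples k : (0 < k)%N ->
  (forall y, Defs.span sigma (iota y) -> A (y *+ k)) ->
  lifting iota sigma A (add_multiples A k).
Proof.
case: hA => hAsg Atf Aspan _ k_gt0 hk.
have mem x : add_multiples A k x -> Defs.span sigma (iota x) -> A x.
  move=> [a [y [Aa ->]]] sx; apply: subgroupD => //; apply: hk.
  apply: (span_of_mulrn k_gt0); rewrite -additive_funMn //.
  have -> : iota (y *+ k) = iota (a + y *+ k) - iota a.
    by rewrite additive_funD // addrAC subrr add0r.
  by apply: spanB => //; apply: Aspan.
have hsg := subgroup_add_multiples k hAsg.
split=> // [x Lx tx | | x].
- apply: (Atf _ _ tx); apply: mem => //.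
  by rewrite iota_torsion //; apply: span0.
- apply: (finite_index_of_multiples fgN hsg k_gt0) => y.
  by exists 0, y; rewrite add0r; split=> //; apply: subgroup0.
- split=> [Ax | [Lx sx]]; last exact: mem.
  by split; [exists x, 0; rewrite mul0rn addr0 | apply: Aspan].
Qed.

Lemma lifting_into :
  exists L, lifting iota sigma A L /\ forall x, L x -> L' (f x).
Proof.
have [K1 K1_gt0 hK1] := lattice_datum_exponent.
have [K2 K2_gt0 hK2] := lifting_exponent hL'.
case: hA => hAsg _ _ _; case: hL' => hL'sg _ _ L'iff.
exists (add_multiples A (K1 * K2)); split.
  apply: lifting_add_multiples => [|y sy]; first by rewrite muln_gt0 K1_gt0.
  by rewrite mulrnA; apply: subgroupMn => //; apply: hK1.
apply: add_multiples_preimage => // [x Ax | y].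
  exact: ((L'iff _).1 (f_lat Ax)).1.
by rewrite mulnC mulrnA; apply: subgroupMn.
Qed.

Lemma preimage_lifting :
  induced_tor_injective f A A' -> lifting iota sigma A (fun x => L' (f x)).
Proof.
move=> hti; have [K1 K1_gt0 hK1] := lattice_datum_exponent.
have [K2 K2_gt0 hK2] := lifting_exponent hL'.
case: hA => hAsg Atf Aspan _; case: hL' => hL'sg L'tf _ L'iff.
have hsg := preimage_subgroup hL'sg fA.
split=> // [x L'fx tx | | x].
- have [k [k_gt0 xk0]] := tx.
  have fx0 : f x = 0.
    by apply: L'tf => //; exists k; rewrite -additive_funMn // xk0 additive_fun0.
  apply: (Atf _ _ tx); apply: induced_tor_injective_mem hti _ _ => //.
    by exists k; rewrite xk0; split=> //; apply: subgroup0.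
  by rewrite fx0 -(additive_fun0 fA); apply: f_lat; apply: subgroup0.
- apply: (finite_index_of_multiples fgN hsg K2_gt0) => y.
  by rewrite additive_funMn.
- split=> [Ax | [L'fx sx]].
    by split; [exact: ((L'iff _).1 (f_lat Ax)).1 | apply: Aspan].
  apply: induced_tor_injective_mem hti _ _ => //.
    by exists K1; split=> //; apply: hK1.
  case: hfR => fRlin fRi; apply/(L'iff _).2; split=> //.
  by rewrite -fRi; apply: span_image fRlin fR_cone sx.
Qed.

Lemma induced_tor_injective_of_lifting L :
  lifting iota sigma A L -> induced_injective f L L' ->
  induced_tor_injective f A A'.
Proof.
case=> _ _ _ Liff inj x y tx ty A'fxy.
have [hAsg _ _ _] := hA; have [_ _ _ L'iff] := hL'.
apply/(Liff _).2; split; first by apply: inj; exact: ((L'iff _).1 A'fxy).1.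
exact/span_of_torsion_mod/torsion_modB.
Qed.

End Lifting.

Theorem lemma2p5p6 (R : realType)
  (N N' : zmodType) (n n' : nat)
  (iota : N -> 'rV[R]_n) (iota' : N' -> 'rV[R]_n')
  (I I' : finType)
  (sigma : I -> 'rV[R]_n -> Prop) (Lat : I -> N -> Prop)
  (sigma' : I' -> 'rV[R]_n' -> Prop) (Lat' : I' -> N' -> Prop)
  (f : N -> N') (fR : 'rV[R]_n -> 'rV[R]_n')
  (hF : KMfan iota sigma Lat) (hF' : KMfan iota' sigma' Lat')
  (hfR : realified_map iota iota' f fR)
  (hf : KMmorphism sigma Lat sigma' Lat' f fR)
  (i : I) (j : I') (hij : forall v, sigma i v -> sigma' j (fR v))
  (L' : N' -> Prop) (hL' : lifting iota' (sigma' j) (Lat' j) L') :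
  [/\ (* (1) *)
      (exists L : N -> Prop, lifting iota (sigma i) (Lat i) L /\
          forall x, L x -> L' (f x)),
      (* (2) *)
      ((forall x y, torsion x -> torsion y -> f x = f y -> x = y) ->
       (forall x y, Lat i x -> Lat i y -> f x = f y -> x = y) ->
       (forall y', Lat' j y' -> exists x, Lat i x /\ f x = y') ->
       induced_tor_injective f (Lat i) (Lat' j)),
      (* (3) *)
      (induced_tor_injective f (Lat i) (Lat' j) ->
       lifting iota (sigma i) (Lat i) (fun x => L' (f x)) /\
       induced_injective f (fun x => L' (f x)) L') &
      (* (4) *)
      ((exists L : N -> Prop, [/\ lifting iota (sigma i) (Lat i) L,
            (forall x, L x -> L' (f x)) & induced_injective f L L']) ->
       induced_tor_injective f (Lat i) (Lat' j))].
Proof.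
have [fgN [[iotaA iota_ker _] [_ [_ [_ [_ [_ [hLat _]]]]]]]] := hF.
have iota_torsion x : torsion x -> iota x = 0 := (iota_ker x).2.
have [fA _] := hf.
have f_lat := KMmorphism_lattice_into hF' (hLat i) hfR hf hij.
split.
- exact: lifting_into fgN iotaA iota_torsion fA (hLat i) hL' f_lat.
- by case: (hLat i) => hAsg _ _ _; apply: induced_tor_injective_of_bij.
- move=> hti; split; last by move=> x y; rewrite fA.
  exact: preimage_lifting fgN iotaA fA hfR hij (hLat i) hL' f_lat hti.
- move=> [L [hL _ inj]].
  exact: (induced_tor_injective_of_lifting iotaA (hLat i) hL' hL inj).
Qed.
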